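(* Let $\mathcal{X}=({\bm X},m^{\bm X}_\bullet,\nu^{\bm X})$, $\mathcal{Y}=({\bm Y},m^{\bm Y}_\bullet,\nu^{\bm Y})$ be Markov chains on finite state spaces, $C:{\bm X}\times{\bm Y}\to\mathbb{R}_+$ a cost matrix, $\delta\in(0,1]$ and $k\in\mathbb{N}\cup\{\infty\}$. Then $\lim_{\epsilon\to0}d^{\delta,(k)}_{\mathrm{WL},\epsilon}(\mathcal{X},\mathcal{Y};C)=d^{\delta,(k)}_{\mathrm{WL}}(\mathcal{X},\mathcal{Y};C)$.
   Context: For $\alpha\in\mathcal{P}({\bm X}),\beta\in\mathcal{P}({\bm Y})$, cost $D$ and $\epsilon\ge0$, the entropy-regularized OT cost is $d^{\epsilon}_{\mathrm W}(\alpha,\beta;D)=\min_{P\in\mathcal{C}(\alpha,\beta)}\sum_{i,j}P_{ij}D_{ij}+\epsilon\sum_{i,j}P_{ij}\log P_{ij}$, where $\mathcal{C}(\alpha,\beta)$ is the set of couplings (matrices with marginals $\alpha,\beta$); $d_{\mathrm W}=d^0_{\mathrm W}$ is the usual OT cost. Define $C^{\epsilon,\delta,(0)}=C$ and $C^{\epsilon,\delta,(l)}_{ij}=\delta C_{ij}+(1-\delta)d^\epsilon_{\mathrm W}(m^{\bm X}_i,m^{\bm Y}_j;C^{\epsilon,\delta,(l-1)})$; set $d^{\delta,(k)}_{\mathrm{WL},\epsilon}(\mathcal{X},\mathcal{Y};C)=d^\epsilon_{\mathrm W}(\nu^{\bm X},\nu^{\bm Y};C^{\epsilon,\delta,(k)})$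 for $k\in\mathbb{N}$ and $d^{\delta,(\infty)}_{\mathrm{WL},\epsilon}=\lim_{k\to\infty}d^{\delta,(k)}_{\mathrm{WL},\epsilon}$ (this limit exists for $\delta>0$). A Markovian coupling between $\mathcal{X}$ and $\mathcal{Y}$ is a (possibly time-inhomogeneous) Markov chain $(X_t,Y_t)_{t\in\mathbb{N}}$ on ${\bm X}\times{\bm Y}$ with $\mathrm{law}(X_0,Y_0)\in\mathcal{C}(\nu^{\bm X},\nu^{\bm Y})$ and conditional law of $(X_{t+1},Y_{t+1})$ given $(X_t,Y_t)=(x,y)$ in $\mathcal{C}(m^{\bm X}_x,m^{\bm Y}_y)$ for all $t,x,y$; $\Pi$ is their set. $d^{\delta,(k)}_{\mathrm{WL}}=\inf_{\Pi}\mathbb{E}\big[\sum_{t=0}^{k-1}\delta(1-\delta)^tC(X_t,Y_t)+(1-\delta)^kC(X_k,Y_k)\big]$ for finite $k$ and $d^{\delta,(\infty)}_{\mathrm{WL}}=\inf_{\Pi}\mathbb{E}\big[\sum_{t\ge0}\delta(1-\delta)^tC(X_t,Y_t)\big]$. *)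

From HB Require Import structures.
From mathcomp Require Import all_boot all_order all_algebra.
From mathcomp Require Import all_classical all_reals all_analysis.
Set Implicit Arguments. Unset Strict Implicit. Unset Printing Implicit Defensive.
Import Order.TTheory GRing.Theory Num.Theory.
Import numFieldNormedType.Exports.
Local Open Scope classical_set_scope.
Local Open Scope ring_scope.

Section WL.
Variable R : realType.

Definition prob_vec (T : finType) (p : T -> R) : Prop :=
  (forall x, 0 <= p x) /\ \sum_(x : T) p x = 1.

Definition coupling (X Y : finType) (a : X -> R) (b : Y -> R) (P : X -> Y -> R) : Prop :=
  [/\ forall x y, 0 <= P x y,
      forall x, \sum_(y : Y) P x y = a x &
      forall y, \sum_(x : X) P x y = b y].

(** entropy-regularized OT cost d^eps_W(a,b;D) (minimum written as infimum;
    ln 0 = 0 in mathcomp-analysis, so 0 log 0 = 0) *)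
Definition dW_eps (X Y : finType) (eps : R) (a : X -> R) (b : Y -> R)
  (D : X -> Y -> R) : R :=
  inf [set v | exists P, coupling a b P /\
     v = \sum_(x : X) \sum_(y : Y) (P x y * D x y + eps * (P x y * ln (P x y)))].

Fixpoint Ceps (X Y : finType) (mX : X -> X -> R) (mY : Y -> Y -> R)
  (C : X -> Y -> R) (eps delta : R) (l : nat) : X -> Y -> R :=
  match l with
  | 0 => C
  | l'.+1 => fun x y => delta * C x y +
      (1 - delta) * dW_eps eps (mX x) (mY y) (Ceps mX mY C eps delta l')
  end.

Inductive natinf := Fin of nat | Inf.

Definition dWL_eps_fin (X Y : finType) (mX : X -> X -> R) (nuX : X -> R)
  (mY : Y -> Y -> R) (nuY : Y -> R) (C : X -> Y -> R) (eps delta : R) (k : nat) : R :=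
  dW_eps eps nuX nuY (Ceps mX mY C eps delta k).

Definition dWL_eps (X Y : finType) (mX : X -> X -> R) (nuX : X -> R)
  (mY : Y -> Y -> R) (nuY : Y -> R) (C : X -> Y -> R) (eps delta : R) (k : natinf) : R :=
  match k with
  | Fin n => dWL_eps_fin mX nuX mY nuY C eps delta n
  | Inf => limn (fun n => dWL_eps_fin mX nuX mY nuY C eps delta n)
  end.

(** Markovian couplings: a (time-inhomogeneous) Markov chain on X*Y given by
    its initial law pi0 and its transition kernels K t (x,y) (x',y'). *)
Definition markov_coupling (X Y : finType) (mX : X -> X -> R) (nuX : X -> R)
  (mY : Y -> Y -> R) (nuY : Y -> R) (pi0 : X -> Y -> R)
  (K : nat -> X -> Y -> X -> Y -> R) : Prop :=
  coupling nuX nuY pi0 /\ forall t x y, coupling (mX x) (mY y) (K t x y).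

Fixpoint mlaw (X Y : finType) (pi0 : X -> Y -> R)
  (K : nat -> X -> Y -> X -> Y -> R) (t : nat) : X -> Y -> R :=
  match t with
  | 0 => pi0
  | t'.+1 => fun x' y' =>
      \sum_(x : X) \sum_(y : Y) mlaw pi0 K t' x y * K t' x y x' y'
  end.

Definition mexp (X Y : finType) (pi0 : X -> Y -> R)
  (K : nat -> X -> Y -> X -> Y -> R) (C : X -> Y -> R) (t : nat) : R :=
  \sum_(x : X) \sum_(y : Y) mlaw pi0 K t x y * C x y.

Definition dWL (X Y : finType) (mX : X -> X -> R) (nuX : X -> R)
  (mY : Y -> Y -> R) (nuY : Y -> R) (C : X -> Y -> R) (delta : R) (k : natinf) : R :=
  match k with
  | Fin n => inf [set v | exists pi0 K, markov_coupling mX nuX mY nuY pi0 K /\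
      v = \sum_(0 <= t < n) delta * (1 - delta) ^+ t * mexp pi0 K C t
          + (1 - delta) ^+ n * mexp pi0 K C n]
  | Inf => inf [set v | exists pi0 K, markov_coupling mX nuX mY nuY pi0 K /\
      v = limn (fun n => \sum_(0 <= t < n) delta * (1 - delta) ^+ t * mexp pi0 K C t)]
  end.

End WL.

(* The entropy term of a coupling P lies in [-|X||Y|, 0], so for every cost
   matrix the entropic transport cost is within eps |X||Y| of the
   unregularized one, and both are 1-Lipschitz in the sup norm of the cost.
   Since the recursion defining C^(l) contracts with factor 1 - delta, this
   keeps C^{eps,(l)} within eps |X||Y| / delta of C^{0,(l)} for every l, so
   d^{delta,(k)}_{WL,eps} differs from d_W(nu^X, nu^Y; C^{0,(k)}) by O(eps),
   uniformly in k.  Dynamic programming identifies the latter with the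
   infimum over Markovian couplings: the cost of a Markovian coupling is the
   expected cost-to-go of its transition kernels, which dominates C^{0,(k)},
   and kernels chosen near-optimal for the remaining horizon nearly attain
   it.  For k = oo, the finite-horizon cost of every Markovian coupling is
   within (1 - delta)^k max C of its infinite-horizon cost, so both sides
   converge as k -> oo and the O(eps) bound passes to the limit. *)

From HB Require Import structures.
From mathcomp Require Import all_boot all_order all_algebra.
From mathcomp Require Import all_classical all_reals all_analysis.
From mathcomp Require Import ring lra.
Set Implicit Arguments. Unset Strict Implicit. Unset Printing Implicit Defensive.
Import Order.TTheory GRing.Theory Num.Theory.
Import numFieldNormedType.Exports.
Local Open Scope classical_set_scope.
Local Open Scope ring_scope.

Section RealFacts.
Variable R : realType.

Lemma inf_image_le_add (I : Type) (A : set I) (f g : I -> R) (c : R) :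
  A !=set0 -> has_lbound (f @` A) -> (forall i, A i -> f i <= g i + c) ->
  inf (f @` A) <= inf (g @` A) + c.
Proof.
move=> [i0 Ai0] lbf fg; rewrite -lerBlDr; apply: lb_le_inf; first by exists (g i0), i0.
move=> _ [i Ai <-]; rewrite lerBlDr; apply: le_trans (fg i Ai).
by apply: ge_inf => //; exists i.
Qed.

Lemma inf_image_dist (I : Type) (A : set I) (f g : I -> R) (c : R) :
  A !=set0 -> has_lbound (f @` A) -> has_lbound (g @` A) ->
  (forall i, A i -> `|f i - g i| <= c) -> `|inf (f @` A) - inf (g @` A)| <= c.
Proof.
move=> A0 lbf lbg fg.
have le_fg : inf (f @` A) <= inf (g @` A) + c.
  by apply: inf_image_le_add => // i /fg; rewrite ler_norml; lra.
have le_gf : inf (g @` A) <= inf (f @` A) + c.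
  by apply: inf_image_le_add => // i /fg; rewrite ler_norml; lra.
by rewrite ler_norml; apply/andP; split; lra.
Qed.

Lemma xlnx_geN1 (p : R) : 0 <= p -> -1 <= p * ln p.
Proof.
rewrite le_eqVlt => /predU1P[<-|p0]; first by rewrite mul0r lerN10.
have := @ln_sublinear _ p^-1; rewrite invr_gt0 lnV ?posrE // ltrNl => /(_ p0) lt_ln.
by rewrite -(mulfV (lt0r_neq0 p0)) -mulrN ler_wpM2l // ltW.
Qed.

Lemma cvgn_geometric_increments (u : R ^nat) (B q : R) : `|q| < 1 ->
  (forall n, `|u n.+1 - u n| <= B * q ^+ n) -> cvgn u.
Proof.
move=> q1 du; have -> : u = fun n => u 0%N + series (telescope u) n.
  by apply: funext => n; exact: eq_sum_telescope.
apply: is_cvgD; first exact: is_cvg_cst.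
apply: normed_cvg; apply: (@series_le_cvg _ _ (geometric B q)).
- by move=> n /=.
- by move=> n /=; apply: le_trans (du n).
- by move=> n /=; exact: du.
- exact: is_cvg_geometric_series.
Qed.

Lemma cvgn_geometric_dist (u : R ^nat) (l B q : R) : `|q| < 1 ->
  (forall n, `|l - u n| <= B * q ^+ n) -> u @ \oo --> l.
Proof.
move=> q1 dul; have Bq0 : (fun n => B * q ^+ n) @ \oo --> 0.
  by rewrite -(mulr0 B); apply: cvgMr; exact: cvg_expr.
apply: (@squeeze_cvgr _ _ _ _ (fun n => l - B * q ^+ n) (fun n => l + B * q ^+ n)).
- by apply: nearW => n; have := dul n; rewrite ler_norml => /andP[? ?]; apply/andP; split; lra.
- by rewrite -[X in _ --> X]subr0; apply: cvgB => //; exact: cvg_cst.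
- by rewrite -[X in _ --> X]addr0; apply: cvgD => //; exact: cvg_cst.
Qed.

Lemma cvg_dist_le (u v : R ^nat) (l1 l2 c : R) : u @ \oo --> l1 -> v @ \oo --> l2 ->
  (forall n, `|u n - v n| <= c) -> `|l1 - l2| <= c.
Proof.
move=> ul vl uvc; have uv : (fun n => `|u n - v n|) @ \oo --> `|l1 - l2|.
  by apply: cvg_norm; exact: cvgB.
by rewrite -(cvg_lim _ uv) //; apply: limr_le; [apply/cvg_ex; eexists; exact: uv | exact: nearW].
Qed.

Lemma cvg_at_right0_linear_bound (g : R -> R) (l M : R) :
  (forall e, 0 < e -> `|g e - l| <= e * M) -> g e @[e --> 0^'+] --> l.
Proof.
move=> gl; have eM0 : e * M @[e --> 0^'+] --> 0.
  have id0 : (fun e : R => e) @ nbhs (0:R) --> (0:R) by exact: cvg_id.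
  by apply: cvg_at_right_filter; rewrite -[X in _ --> X](mul0r M); exact: cvgMl.
apply: (@squeeze_cvgr _ _ _ _ (fun e => l - e * M) (fun e => l + e * M)).
- near=> e; have e0 : 0 < e by near: e; exact: nbhs_right_gt.
  by have := gl e e0; rewrite ler_norml => /andP[? ?]; apply/andP; split; lra.
- by rewrite -[X in _ --> X]subr0; apply: cvgB => //; exact: cvg_cst.
- by rewrite -[X in _ --> X]addr0; apply: cvgD => //; exact: cvg_cst.
Unshelve. all: by end_near.
Qed.

End RealFacts.

Section OptimalTransport.
Variables (R : realType) (X Y : finType).
Implicit Types (P D : X -> Y -> R).

Definition ot_cost P D : R := \sum_x \sum_y P x y * D x y.
Definition negentropy P : R := \sum_x \sum_y P x y * ln (P x y).
Definition sum_abs D : R := \sum_x \sum_y `|D x y|.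
Definition card_XY : R := #|X|%:R * #|Y|%:R.

Lemma ler_sum_entry D x y : (forall x y, 0 <= D x y) -> D x y <= \sum_x \sum_y D x y.
Proof.
move=> D_ge0; rewrite (bigD1 x) //= (bigD1 y) //= -addrA lerDl.
by rewrite addr_ge0 ?sumr_ge0 // => x' _; exact: sumr_ge0.
Qed.

Lemma ler_sum_abs D x y : `|D x y| <= sum_abs D.
Proof. by apply: (ler_sum_entry (D := fun x y => `|D x y|)) => ? ?. Qed.

Lemma card_XY_ge0 : 0 <= card_XY.
Proof. by rewrite mulr_ge0. Qed.

Lemma ot_cost_lincomb (a b : R) P D1 D2 :
  ot_cost P (fun x y => a * D1 x y + b * D2 x y) = a * ot_cost P D1 + b * ot_cost P D2.
Proof.
rewrite /ot_cost !mulr_sumr -big_split; apply: eq_bigr => x _.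
by rewrite !mulr_sumr -big_split; apply: eq_bigr => y _ /=; ring.
Qed.

Lemma ot_cost0 P : ot_cost P (fun _ _ => 0) = 0.
Proof. by rewrite /ot_cost big1 // => x _; rewrite big1 // => y _; rewrite mulr0. Qed.

Lemma ot_cost1 P : ot_cost P (fun _ _ => 1) = \sum_x \sum_y P x y.
Proof. by apply: eq_bigr => x _; apply: eq_bigr => y _; rewrite mulr1. Qed.

Lemma ot_cost_ge0 P D : (forall x y, 0 <= P x y) -> (forall x y, 0 <= D x y) ->
  0 <= ot_cost P D.
Proof. by move=> P_ge0 D_ge0; do 2!apply: sumr_ge0 => ? _; rewrite mulr_ge0. Qed.

Definition prob_matrix P := (forall x y, 0 <= P x y) /\ \sum_x \sum_y P x y = 1.

Section ProbabilityMatrix.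
Variable P : X -> Y -> R.
Hypothesis P_prob : prob_matrix P.
Let P_ge0 := P_prob.1.
Let P_mass1 := P_prob.2.

Lemma prob_matrix_le1 x y : P x y <= 1.
Proof. by rewrite -P_mass1; apply: ler_sum_entry; exact: P_ge0. Qed.

Lemma ot_cost_le_add D1 D2 (c : R) : (forall x y, D1 x y <= D2 x y + c) ->
  ot_cost P D1 <= ot_cost P D2 + c.
Proof.
move=> le_D; rewrite -[c in _ + c]mulr1 -P_mass1 mulr_sumr /ot_cost -big_split.
apply: ler_sum => x _; rewrite mulr_sumr -big_split; apply: ler_sum => y _ /=.
by rewrite [c * _]mulrC -mulrDr ler_wpM2l ?P_ge0.
Qed.

Lemma ot_cost_dist D1 D2 (c : R) : (forall x y, `|D1 x y - D2 x y| <= c) ->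
  `|ot_cost P D1 - ot_cost P D2| <= c.
Proof.
move=> le_D.
have le12 : ot_cost P D1 <= ot_cost P D2 + c.
  by apply: ot_cost_le_add => x y; have := le_D x y; rewrite ler_norml; lra.
have le21 : ot_cost P D2 <= ot_cost P D1 + c.
  by apply: ot_cost_le_add => x y; have := le_D x y; rewrite ler_norml; lra.
by rewrite ler_norml; apply/andP; split; lra.
Qed.

Lemma negentropy_bounds : - card_XY <= negentropy P <= 0.
Proof.
apply/andP; split; last first.
  apply: sumr_le0 => x _; apply: sumr_le0 => y _.
  by rewrite mulr_ge0_le0 ?P_ge0 // ln_le0 // prob_matrix_le1.
have -> : card_XY = \sum_(x : X) \sum_(y : Y) 1.
  by rewrite sumr_const sumr_const [LHS]mulrC mulr_natr.
rewrite -sumrN; apply: ler_sum => x _; rewrite -sumrN; apply: ler_sum => y _.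
exact/xlnx_geN1/P_ge0.
Qed.

End ProbabilityMatrix.

Section Couplings.
Variables (a : X -> R) (b : Y -> R).
Hypotheses (a_prob : prob_vec a) (b_prob : prob_vec b).

Lemma coupling_prob_matrix P : coupling a b P -> prob_matrix P.
Proof.
case=> P_ge0 Pa _; split => //.
by rewrite (eq_bigr _ (fun x _ => Pa x)); case: a_prob.
Qed.

Lemma product_coupling : coupling a b (fun x y => a x * b y).
Proof.
case: a_prob => a_ge0 a1; case: b_prob => b_ge0 b1; split.
- by move=> x y; rewrite mulr_ge0.
- by move=> x; rewrite -mulr_sumr b1 mulr1.
- by move=> y; rewrite -mulr_suml a1 mul1r.
Qed.

Lemma dW_epsE eps D : dW_eps eps a b D =
  inf ((fun P => ot_cost P D + eps * negentropy P) @` coupling a b).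
Proof.
have objE P : \sum_x \sum_y (P x y * D x y + eps * (P x y * ln (P x y))) =
    ot_cost P D + eps * negentropy P.
  rewrite /ot_cost /negentropy mulr_sumr -big_split; apply: eq_bigr => x _ /=.
  by rewrite mulr_sumr -big_split.
congr inf; apply/seteqP; split => [v [P [cP ->]] | _ [P cP <-]].
  by exists P; rewrite ?objE.
by exists P; rewrite objE.
Qed.

Section Entropic.
Variable eps : R.
Hypothesis eps_ge0 : 0 <= eps.

Lemma has_lbound_ot_objective D :
  has_lbound ((fun P => ot_cost P D + eps * negentropy P) @` coupling a b).
Proof.
exists (- sum_abs D - eps * card_XY) => _ [P cP <-].
have P_prob := coupling_prob_matrix cP.
have cost_ge : ot_cost P (fun _ _ => 0) <= ot_cost P D + sum_abs D.
  apply: ot_cost_le_add => // x y; have := ler_sum_abs D x y.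
  by rewrite ler_norml; lra.
have /andP[ent_ge _] := negentropy_bounds P_prob.
have : eps * - card_XY <= eps * negentropy P by rewrite ler_wpM2l.
by rewrite ot_cost0 in cost_ge; lra.
Qed.

Lemma dW_eps_le P D : coupling a b P ->
  dW_eps eps a b D <= ot_cost P D + eps * negentropy P.
Proof. by move=> cP; rewrite dW_epsE; apply: ge_inf; [exact: has_lbound_ot_objective | exists P]. Qed.

Lemma dW_eps_approx D eta : 0 < eta -> exists2 P, coupling a b P &
  ot_cost P D + eps * negentropy P < dW_eps eps a b D + eta.
Proof.
move=> eta_gt0; rewrite dW_epsE.
set S := (fun P => _) @` _.
have S_inf : has_inf S.
  split; last exact: has_lbound_ot_objective.
  by eexists; exists (fun x y => a x * b y); first exact: product_coupling.
by have [_ [P cP <-]] := inf_adherent eta_gt0 S_inf; exists P.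
Qed.

End Entropic.

Lemma dW_eps_dist e1 e2 D1 D2 (c : R) : 0 <= e1 -> 0 <= e2 ->
  (forall x y, `|D1 x y - D2 x y| <= c) ->
  `|dW_eps e1 a b D1 - dW_eps e2 a b D2| <= c + `|e1 - e2| * card_XY.
Proof.
move=> e1_ge0 e2_ge0 le_D; rewrite !dW_epsE; apply: inf_image_dist.
- by exists (fun x y => a x * b y); exact: product_coupling.
- exact: has_lbound_ot_objective.
- exact: has_lbound_ot_objective.
move=> P /coupling_prob_matrix P_prob.
have -> : ot_cost P D1 + e1 * negentropy P - (ot_cost P D2 + e2 * negentropy P) =
  (ot_cost P D1 - ot_cost P D2) + (e1 - e2) * negentropy P by ring.
apply: le_trans (ler_normD _ _) _; apply: lerD; first exact: ot_cost_dist.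
rewrite normrM ler_wpM2l // ler_norml.
by have /andP[? ?] := negentropy_bounds P_prob; apply/andP; split; lra.
Qed.

Lemma dW_eps_lipschitz eps D1 D2 (c : R) : 0 <= eps ->
  (forall x y, `|D1 x y - D2 x y| <= c) -> `|dW_eps eps a b D1 - dW_eps eps a b D2| <= c.
Proof. by move=> eps_ge0 /(dW_eps_dist eps_ge0 eps_ge0); rewrite subrr normr0 mul0r addr0. Qed.

End Couplings.
End OptimalTransport.

Section BellmanRecursion.
Variables (R : realType) (X Y : finType).
Variables (mX : X -> X -> R) (mY : Y -> Y -> R) (C : X -> Y -> R) (delta : R).
Hypotheses (mX_prob : forall x, prob_vec (mX x)) (mY_prob : forall y, prob_vec (mY y)).
Hypothesis delta01 : 0 < delta <= 1.

Let delta_gt0 : 0 < delta. Proof. by case/andP: delta01. Qed.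
Let discount_ge0 : 0 <= 1 - delta. Proof. by case/andP: delta01 => _; rewrite subr_ge0. Qed.
Let discount_lt1 : `|1 - delta| < 1.
Proof. by rewrite ger0_norm // ltrBlDr ltrDl. Qed.

Local Notation V eps l := (Ceps mX mY C eps delta l).
Local Notation card := (card_XY R X Y).

Lemma Ceps_succ_dist eps l x y : 0 <= eps ->
  `|V eps l.+1 x y - V eps l x y| <=
    sum_abs (fun x y => V eps 1 x y - C x y) * (1 - delta) ^+ l.
Proof.
move=> eps_ge0; elim: l x y => [|l IH] x y.
  by rewrite expr0 mulr1 (ler_sum_abs (fun x y => V eps 1 x y - C x y)).
rewrite [V eps l.+2 x y]/= [V eps l.+1 x y]/= opprD addrACA subrr add0r -mulrBr.
rewrite normrM ger0_norm // exprS mulrCA ler_wpM2l //.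
exact: dW_eps_lipschitz.
Qed.

Lemma Ceps_dist_Ceps0 eps l x y : 0 <= eps ->
  `|V eps l x y - V 0 l x y| <= eps * card / delta.
Proof.
move=> eps_ge0; have bound_ge0 : 0 <= eps * card / delta.
  by rewrite mulr_ge0 ?invr_ge0 ?mulr_ge0 ?card_XY_ge0 // ltW.
elim: l x y => [|l IH] x y; first by rewrite subrr normr0.
rewrite [V eps l.+1 x y]/= [V 0 l.+1 x y]/= opprD addrACA subrr add0r -mulrBr.
rewrite normrM ger0_norm //.
have := dW_eps_dist (mX_prob x) (mY_prob y) eps_ge0 (lexx 0) IH.
rewrite subr0 (ger0_norm eps_ge0) => /(ler_wpM2l discount_ge0)/le_trans; apply.
set bound := eps * card / delta in bound_ge0 *.
have -> : eps * card = delta * bound by rewrite /bound; field; exact: lt0r_neq0.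
by case/andP: delta01 => _ delta_le1; nra.
Qed.

Lemma exists_near_optimal_kernels (D : nat -> X -> Y -> R) eta : 0 < eta ->
  exists K : nat -> X -> Y -> X -> Y -> R,
    (forall t x y, coupling (mX x) (mY y) (K t x y)) /\
    (forall t x y, ot_cost (K t x y) (D t) <= dW_eps 0 (mX x) (mY y) (D t) + eta).
Proof.
move=> eta_gt0.
have /choice [K K_opt] : forall txy : nat * X * Y, exists P,
    coupling (mX txy.1.2) (mY txy.2) P /\
    ot_cost P (D txy.1.1) <= dW_eps 0 (mX txy.1.2) (mY txy.2) (D txy.1.1) + eta.
  move=> [[t x] y] /=.
  have [P cP lt_P] := dW_eps_approx (mX_prob x) (mY_prob y) (lexx 0) (D t) eta_gt0.
  by exists P; split => //; rewrite mul0r addr0 in lt_P; exact: ltW.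
by exists (fun t x y => K (t, x, y)); split => t x y; case: (K_opt (t, x, y)).
Qed.

Section MarkovCouplings.
Variables (nuX : X -> R) (nuY : Y -> R).
Hypotheses (nuX_prob : prob_vec nuX) (nuY_prob : prob_vec nuY).
Hypothesis C_ge0 : forall x y, 0 <= C x y.
Implicit Types (K : nat -> X -> Y -> X -> Y -> R).

Fixpoint cost_to_go K m s : X -> Y -> R :=
  match m with
  | 0 => C
  | m'.+1 => fun x y =>
      delta * C x y + (1 - delta) * ot_cost (K s x y) (cost_to_go K m' s.+1)
  end.

Lemma ot_cost_mlawS (pi0 : X -> Y -> R) K s (F : X -> Y -> R) :
  ot_cost (mlaw pi0 K s) (fun x y => ot_cost (K s x y) F) =
  ot_cost (mlaw pi0 K s.+1) F.
Proof.
rewrite /ot_cost.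
transitivity (\sum_x \sum_y \sum_x' \sum_y' mlaw pi0 K s x y * K s x y x' y' * F x' y').
  apply: eq_bigr => x _; apply: eq_bigr => y _; rewrite mulr_sumr.
  by apply: eq_bigr => x' _; rewrite mulr_sumr; apply: eq_bigr => y' _; rewrite mulrA.
under eq_bigr => x _ do rewrite exchange_big.
rewrite exchange_big; apply: eq_bigr => x' _.
under eq_bigr => x _ do rewrite exchange_big.
rewrite exchange_big; apply: eq_bigr => y' _ /=.
by rewrite mulr_suml; apply: eq_bigr => x _; rewrite mulr_suml.
Qed.

Lemma ot_cost_mlaw_cost_to_go (pi0 : X -> Y -> R) K m s :
  ot_cost (mlaw pi0 K s) (cost_to_go K m s) =
  \sum_(0 <= t < m) delta * (1 - delta) ^+ t * mexp pi0 K C (s + t) +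
  (1 - delta) ^+ m * mexp pi0 K C (s + m).
Proof.
elim: m s => [|m IH] s; first by rewrite big_geq // add0r expr0 mul1r addn0.
rewrite /= ot_cost_lincomb ot_cost_mlawS IH big_nat_recl // addn0 expr0 mulr1.
rewrite -[ot_cost _ C]/(mexp pi0 K C s) mulrDr mulr_sumr addrA; congr (_ + _ + _).
- by apply: eq_bigr => t _; rewrite addSnnS exprS; ring.
- by rewrite addSnnS exprS mulrA.
Qed.

Lemma Ceps0_le_cost_to_go K : (forall t x y, coupling (mX x) (mY y) (K t x y)) ->
  forall m s x y, V 0 m x y <= cost_to_go K m s x y.
Proof.
move=> K_cpl; elim=> [|m IH] s x y //=.
rewrite lerD2l ler_wpM2l //.
apply: le_trans (dW_eps_le (mX_prob x) (lexx 0) _ (K_cpl s x y)) _.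
rewrite mul0r addr0 -[leRHS]addr0.
apply: (ot_cost_le_add (coupling_prob_matrix (mX_prob x) (K_cpl s x y))) => u v.
by rewrite addr0 IH.
Qed.

Lemma cost_to_go_le_Ceps0 n K eta : 0 <= eta ->
  (forall t x y, coupling (mX x) (mY y) (K t x y)) ->
  (forall t x y, ot_cost (K t x y) (V 0 (n - t.+1)) <=
                 dW_eps 0 (mX x) (mY y) (V 0 (n - t.+1)) + eta) ->
  forall m s x y, (s + m = n)%N -> cost_to_go K m s x y <= V 0 m x y + m%:R * eta.
Proof.
move=> eta_ge0 K_cpl K_opt; elim=> [|m IH] s x y sm_n /=; first by rewrite mul0r addr0.
have := K_opt s x y; rewrite -sm_n addnS subSS addKn => Ks_opt.
have Ks_cost : ot_cost (K s x y) (cost_to_go K m s.+1) <=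
    ot_cost (K s x y) (V 0 m) + m%:R * eta.
  apply: (ot_cost_le_add (coupling_prob_matrix (mX_prob x) (K_cpl s x y))) => u v.
  by apply: IH; rewrite addSnnS.
have /(ler_wpM2l discount_ge0) : ot_cost (K s x y) (cost_to_go K m s.+1) <=
    dW_eps 0 (mX x) (mY y) (V 0 m) + m.+1%:R * eta by rewrite -natr1; lra.
have : (1 - delta) * (m.+1%:R * eta) <= m.+1%:R * eta.
  by rewrite ler_piMl ?mulr_ge0 // lerBlDr lerDl ltW.
lra.
Qed.

Definition markov_couplings :=
  [set p : (X -> Y -> R) * (nat -> X -> Y -> X -> Y -> R) |
    markov_coupling mX nuX mY nuY p.1 p.2].

Definition discounted_cost (pi0 : X -> Y -> R) K n :=
  \sum_(0 <= t < n) delta * (1 - delta) ^+ t * mexp pi0 K C t.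

Lemma markov_couplings_nonempty : markov_couplings !=set0.
Proof.
exists ((fun x y => nuX x * nuY y), (fun _ x y x' y' => mX x x' * mY y y')).
by split => [|t x y]; exact: product_coupling.
Qed.

Lemma mlaw_prob_matrix (pi0 : X -> Y -> R) K t :
  markov_coupling mX nuX mY nuY pi0 K -> prob_matrix (mlaw pi0 K t).
Proof.
case=> pi0_cpl K_cpl; elim: t => [|t [law_ge0 law_mass1]].
  exact: coupling_prob_matrix pi0_cpl.
split => [x' y'|].
  apply: sumr_ge0 => x _; apply: sumr_ge0 => y _.
  by rewrite mulr_ge0 //; case: (K_cpl t x y).
rewrite -ot_cost1 -ot_cost_mlawS -[X in _ = X]law_mass1 -ot_cost1; congr ot_cost.
apply: funext => x; apply: funext => y.
by rewrite ot_cost1; case: (coupling_prob_matrix (mX_prob x) (K_cpl t x y)).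
Qed.

Lemma finite_costE (pi0 : X -> Y -> R) K n :
  discounted_cost pi0 K n + (1 - delta) ^+ n * mexp pi0 K C n =
  ot_cost pi0 (cost_to_go K n 0).
Proof. exact: esym (ot_cost_mlaw_cost_to_go pi0 K n 0). Qed.

Lemma dWL_FinE n : dWL mX nuX mY nuY C delta (Fin n) =
  inf ((fun p => discounted_cost p.1 p.2 n + (1 - delta) ^+ n * mexp p.1 p.2 C n)
       @` markov_couplings).
Proof.
congr inf; apply/seteqP; split => [v [pi0 [K [mc ->]]] | _ [[pi0 K] mc <-]].
  by exists (pi0, K).
by exists pi0, K.
Qed.

Lemma dWL_InfE : dWL mX nuX mY nuY C delta Inf =
  inf ((fun p => limn (discounted_cost p.1 p.2)) @` markov_couplings).
Proof.
congr inf; apply/seteqP; split => [v [pi0 [K [mc ->]]] | _ [[pi0 K] mc <-]].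
  by exists (pi0, K).
by exists pi0, K.
Qed.

Lemma mexp_bounds (pi0 : X -> Y -> R) K t : markov_coupling mX nuX mY nuY pi0 K ->
  0 <= mexp pi0 K C t <= sum_abs C.
Proof.
move=> /(mlaw_prob_matrix t) law_prob; apply/andP; split.
  exact: ot_cost_ge0 law_prob.1 C_ge0.
rewrite -[leRHS]add0r -(ot_cost0 (mlaw pi0 K t)).
apply: (ot_cost_le_add law_prob) => x y.
by rewrite add0r -[C x y]ger0_norm ?ler_sum_abs.
Qed.

Lemma discounted_cost0 (pi0 : X -> Y -> R) K : discounted_cost pi0 K 0 = 0.
Proof. by rewrite /discounted_cost big_geq. Qed.

Lemma discounted_cost_tail (pi0 : X -> Y -> R) K n k :
  markov_coupling mX nuX mY nuY pi0 K ->
  discounted_cost pi0 K n <= discounted_cost pi0 K (n + k) <=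
  discounted_cost pi0 K n + ((1 - delta) ^+ n - (1 - delta) ^+ (n + k)) * sum_abs C.
Proof.
move=> mc; elim: k => [|k IH]; first by rewrite addn0 subrr mul0r addr0 lexx.
have cost_succ : discounted_cost pi0 K (n + k).+1 =
    discounted_cost pi0 K (n + k) + delta * (1 - delta) ^+ (n + k) * mexp pi0 K C (n + k).
  by rewrite /discounted_cost big_nat_recr.
have /andP[mexp_ge0 mexp_le] := mexp_bounds (n + k) mc.
have weight_ge0 : 0 <= delta * (1 - delta) ^+ (n + k) by rewrite mulr_ge0 ?exprn_ge0 // ltW.
have := ler_wpM2l weight_ge0 mexp_le.
have := mulr_ge0 weight_ge0 mexp_ge0.
rewrite addnS cost_succ exprS; case/andP: IH => IH1 IH2 h1 h2.
by apply/andP; split; lra.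
Qed.

Lemma discounted_cost_lim (pi0 : X -> Y -> R) K n :
  markov_coupling mX nuX mY nuY pi0 K ->
  discounted_cost pi0 K n <= limn (discounted_cost pi0 K) <=
  discounted_cost pi0 K n + (1 - delta) ^+ n * sum_abs C.
Proof.
move=> mc; have tail m k := discounted_cost_tail m k mc.
have C_norm : 0 <= sum_abs C by do 2!apply: sumr_ge0 => ? _.
have S_nd : nondecreasing_seq (discounted_cost pi0 K).
  by apply/nondecreasing_seqP => m; have /andP[+ _] := tail m 1; rewrite addn1.
have S_cvg : cvgn (discounted_cost pi0 K).
  apply: nondecreasing_is_cvgn => //; exists (sum_abs C) => _ [m _ <-].
  have /andP[_] := tail 0 m; rewrite discounted_cost0 add0n expr0 add0r.
  by have := mulr_ge0 (exprn_ge0 m discount_ge0) C_norm; lra.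
apply/andP; split; first exact: nondecreasing_cvgn_le.
apply: limr_le => //; exists n => // m /= le_nm; rewrite -(subnKC le_nm).
have /andP[_] := tail n (m - n)%N.
by have := mulr_ge0 (exprn_ge0 (n + (m - n))%N discount_ge0) C_norm; lra.
Qed.

Lemma finite_cost_dist_lim (pi0 : X -> Y -> R) K n :
  markov_coupling mX nuX mY nuY pi0 K ->
  `|limn (discounted_cost pi0 K) -
    (discounted_cost pi0 K n + (1 - delta) ^+ n * mexp pi0 K C n)| <=
  (1 - delta) ^+ n * sum_abs C.
Proof.
move=> mc; have /andP[lim_ge lim_le] := discounted_cost_lim n mc.
have /andP[mexp_ge0 mexp_le] := mexp_bounds n mc.
have q_ge0 := exprn_ge0 n discount_ge0.
have := ler_wpM2l q_ge0 mexp_le; have := mulr_ge0 q_ge0 mexp_ge0.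
by rewrite ler_norml => ? ?; apply/andP; split; lra.
Qed.

Lemma has_lbound_finite_costs n : has_lbound
  ((fun p => discounted_cost p.1 p.2 n + (1 - delta) ^+ n * mexp p.1 p.2 C n)
   @` markov_couplings).
Proof.
exists 0 => _ [[pi0 K] mc <-] /=.
have /andP[+ _] := discounted_cost_tail 0 n mc; rewrite discounted_cost0 add0n.
have /andP[mexp_ge0 _] := mexp_bounds n mc.
by move=> /addr_ge0; apply; rewrite mulr_ge0 ?exprn_ge0.
Qed.

Lemma dWL_Fin_dW0 n : dWL mX nuX mY nuY C delta (Fin n) = dW_eps 0 nuX nuY (V 0 n).
Proof.
rewrite dWL_FinE; apply/eqP; rewrite eq_le; apply/andP; split.
- apply/ler_addgt0Pr => e e_gt0.
  pose eta := e / n.+1%:R.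
  have eta_gt0 : 0 < eta by rewrite divr_gt0.
  have e_eq : e = eta + n%:R * eta by rewrite /eta -natr1; field; rewrite natr1 pnatr_eq0.
  (* the kernel used at time t is near-optimal for the remaining horizon *)
  have [K [K_cpl K_opt]] := exists_near_optimal_kernels (fun t => V 0 (n - t.+1)) eta_gt0.
  have [pi0 pi0_cpl] := dW_eps_approx nuX_prob nuY_prob (lexx 0) (V 0 n) eta_gt0.
  rewrite mul0r addr0 => pi0_opt.
  apply: le_trans (ge_inf (has_lbound_finite_costs n) _) _; first by exists (pi0, K).
  rewrite /= finite_costE.
  have cost_le x y := cost_to_go_le_Ceps0 (ltW eta_gt0) K_cpl K_opt x y (erefl (0 + n)%N).
  have := ot_cost_le_add (coupling_prob_matrix nuX_prob pi0_cpl) cost_le.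
  lra.
- apply: lb_le_inf; first by have [p mc] := markov_couplings_nonempty; eexists; exists p.
  move=> _ [[pi0 K] [pi0_cpl K_cpl] <-]; rewrite /= finite_costE.
  apply: le_trans (dW_eps_le nuX_prob (lexx 0) _ pi0_cpl) _.
  rewrite mul0r addr0 -[leRHS]addr0.
  apply: (ot_cost_le_add (coupling_prob_matrix nuX_prob pi0_cpl)) => x y.
  by rewrite addr0 Ceps0_le_cost_to_go.
Qed.

Lemma dWL_Inf_Fin_dist n :
  `|dWL mX nuX mY nuY C delta Inf - dWL mX nuX mY nuY C delta (Fin n)| <=
  (1 - delta) ^+ n * sum_abs C.
Proof.
rewrite dWL_InfE dWL_FinE; apply: inf_image_dist => [|||[pi0 K] mc].
- exact: markov_couplings_nonempty.
- exists 0 => _ [[pi0 K] mc <-] /=.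
  by have /andP[+ _] := discounted_cost_lim 0 mc; rewrite discounted_cost0.
- exact: has_lbound_finite_costs.
- exact: finite_cost_dist_lim.
Qed.

Lemma cvgn_dWL_Fin : (fun n => dWL mX nuX mY nuY C delta (Fin n)) @ \oo -->
  dWL mX nuX mY nuY C delta Inf.
Proof.
apply: (cvgn_geometric_dist (B := sum_abs C) discount_lt1) => n.
by rewrite mulrC; exact: dWL_Inf_Fin_dist.
Qed.

Lemma dWL_eps_Fin_dist eps n : 0 <= eps ->
  `|dWL_eps mX nuX mY nuY C eps delta (Fin n) - dWL mX nuX mY nuY C delta (Fin n)| <=
  eps * (card / delta + card).
Proof.
move=> eps_ge0; rewrite dWL_Fin_dW0 /dWL_eps /dWL_eps_fin mulrDr mulrA.
have := dW_eps_dist nuX_prob nuY_prob eps_ge0 (lexx 0)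
  (fun x y => Ceps_dist_Ceps0 n x y eps_ge0).
by rewrite subr0 (ger0_norm eps_ge0).
Qed.

Lemma cvgn_dWL_eps_Fin eps : 0 <= eps ->
  cvgn (fun n => dWL_eps mX nuX mY nuY C eps delta (Fin n)).
Proof.
move=> eps_ge0; apply: (cvgn_geometric_increments
  (B := sum_abs (fun x y => V eps 1 x y - C x y)) discount_lt1) => n.
by apply: (dW_eps_lipschitz nuX_prob nuY_prob eps_ge0) => x y; exact: Ceps_succ_dist.
Qed.

Lemma dWL_eps_dist eps k : 0 <= eps ->
  `|dWL_eps mX nuX mY nuY C eps delta k - dWL mX nuX mY nuY C delta k| <=
  eps * (card / delta + card).
Proof.
move=> eps_ge0; case: k => [n|]; first exact: dWL_eps_Fin_dist.
exact: cvg_dist_le (cvgn_dWL_eps_Fin eps_ge0) cvgn_dWL_Fin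
  (fun n => dWL_eps_Fin_dist n eps_ge0).
Qed.

End MarkovCouplings.

End BellmanRecursion.

Theorem theorem21 (R : realType) (X Y : finType)
  (mX : X -> X -> R) (nuX : X -> R) (mY : Y -> Y -> R) (nuY : Y -> R)
  (C : X -> Y -> R) (delta : R) (k : natinf) :
  prob_vec nuX -> (forall x, prob_vec (mX x)) ->
  prob_vec nuY -> (forall y, prob_vec (mY y)) ->
  (forall x y, 0 <= C x y) ->
  0 < delta <= 1 ->
  dWL_eps mX nuX mY nuY C eps delta k @[eps --> 0^'+] -->
    dWL mX nuX mY nuY C delta k.
Proof.
move=> nuX_prob mX_prob nuY_prob mY_prob C_ge0 delta01.
apply: cvg_at_right0_linear_bound => eps eps_gt0.
exact: dWL_eps_dist (ltW eps_gt0).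
Qed.
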